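(* Suppose $S,T\subseteq[r]$ and $S$ dominates $T$. Let $u,v$ be $\mathbf{ab}$-monomials, possibly empty. Then (1) $m(S)\cdot\mathbf a\cdot v$ dominates $m(T)\cdot\mathbf a\cdot v$; (2) $u\cdot\mathbf a\cdot m(S)$ dominates $u\cdot\mathbf a\cdot m(T)$; (3) $u\cdot\mathbf a\cdot m(S)\cdot\mathbf a\cdot v$ dominates $u\cdot\mathbf a\cdot m(T)\cdot\mathbf a\cdot v$.
   Context: For a permutation $\pi=a_1\cdots a_{N+1}\in S_{N+1}$, its descent set is $\{i\in[N]:a_i>a_{i+1}\}$, and $D(S)$ is the set of permutations in $S_{N+1}$ with descent set $S\subseteq[N]$. The inversion set is $I(\pi)=\{(a_i,a_j):i<j,\ a_i>a_j\}$; weak Bruhat order: $\pi\le_w\pi'$ iff $I(\pi)\subseteq I(\pi')$. For $S,T\subseteq[N]$, $S$ dominates $T$ if there is an injection $\phi:D(T)\to D(S)$ with $\pi\le_w\phi(\pi)$ for all $\pi\in D(T)$. For $S\subseteq[N]$, $m(S)=u_1\cdots u_N$ is the word in noncommuting letters $\mathbf a,\mathbf b$ with $u_i=\mathbf b$ if $i\in S$ and $u_i=\mathbf a$ otherwise; conversely a word of length $N$ determines a subset of $[N]$, and dominance between two words of the same length $N$ means dominance between the corresponding subsets of $[N]$ (permutations in $S_{N+1}$). *)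

From mathcomp Require Import all_boot all_fingroup.
Set Implicit Arguments. Unset Strict Implicit. Unset Printing Implicit Defensive.

(* ab-words are encoded as seq bool: false = letter a, true = letter b. *)
Definition letter_a : bool := false.
Definition letter_b : bool := true.

(* A permutation pi = a_1 ... a_{N+1} of S_{N+1} is p : {perm 'I_N.+1},
   with a_{k+1} = p k (0-indexed positions and values). *)

(* Descent word of p: its k-th letter (0-based, k < N) is b iff a_{k+1} > a_{k+2},
   i.e. the word m(Des p). *)
Definition desc_word (N : nat) (p : {perm 'I_N.+1}) : seq bool :=
  [seq (p (inord k.+1) < p (inord k))%N | k <- iota 0 N].

Definition Dset (N : nat) (w : seq bool) : {set {perm 'I_N.+1}} :=
  [set p | desc_word p == w].

Definition inv_set (N : nat) (p : {perm 'I_N.+1}) : {set 'I_N.+1 * 'I_N.+1} :=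
  [set x : 'I_N.+1 * 'I_N.+1 | [exists i : 'I_N.+1, exists j : 'I_N.+1,
     [&& (i < j)%N, (p j < p i)%N & x == (p i, p j)]]].

Definition weak_le (N : nat) (p q : {perm 'I_N.+1}) : bool :=
  inv_set p \subset inv_set q.

Definition dom_at (N : nat) (w1 w2 : seq bool) : Prop :=
  exists phi : {perm 'I_N.+1} -> {perm 'I_N.+1},
    {in Dset N w2 &, injective phi} /\
    (forall p, p \in Dset N w2 -> phi p \in Dset N w1 /\ weak_le p (phi p)).

Definition dominates (w1 w2 : seq bool) : Prop :=
  size w1 = size w2 /\ dom_at (size w1) w1 w2.

(* m(S) for S subset of [r] (element k of 'I_r stands for k+1 in [r]). *)
Definition mword (r : nat) (S : {set 'I_r}) : seq bool :=
  [seq (i \in S) | i <- enum 'I_r].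

From mathcomp Require Import all_boot all_fingroup zify.

(* A permutation in D(P m(T) Q), with |P| = k, restricts to the r + 1 positions
   k, ..., k + r to a pattern s in D(T).  The dominance injection sends s to a
   pattern t in D(S) above s in weak order; rearranging the entries of the
   window according to t, without changing the set of values it holds, gives a
   permutation whose descent word is P m(S) Q.  Inversions with an endpoint
   outside the window are unchanged and those inside grow as from s to t.  The
   letters a flanking the window remain ascents because going up in weak order
   can only raise the first entry of a pattern and lower its last one.  The
   map is injective since the new pattern t determines s. *)

Set Implicit Arguments.
Unset Strict Implicit.
Unset Printing Implicit Defensive.

Local Open Scope group_scope.

Lemma card_ord_lt n c : c <= n -> #|[set x : 'I_n | x < c]| = c.
Proof.
move=> le_cn; rewrite -sum1_card (eq_bigl (fun i : 'I_n => i < c)) => [|i].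
  by rewrite (big_ord_narrow le_cn) sum1_card card_ord.
by rewrite inE.
Qed.

Lemma card_perm_lt n (s : {perm 'I_n}) i : #|[set j | s j < s i]| = s i.
Proof.
have -> : [set j | s j < s i] = s @^-1: [set x : 'I_n | x < s i].
  by apply/setP => j; rewrite !inE.
by rewrite card_preimset ?card_ord_lt 1?ltnW //; apply: perm_inj.
Qed.

Lemma eq_perm_order n (s s' : {perm 'I_n}) :
  (forall i j, (s i < s j) = (s' i < s' j)) -> s = s'.
Proof.
move=> lt_ss'; apply/permP => i; apply: val_inj.
rewrite /= -card_perm_lt -[RHS]card_perm_lt.
by apply: eq_card => j; rewrite !inE lt_ss'.
Qed.

Section Rank.

Variables (n : nat) (f : 'I_n -> nat).
Hypothesis f_inj : injective f.

Definition rank i := #|[set j | f j < f i]|.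

Lemma rank_ltE i j : (rank i < rank j) = (f i < f j).
Proof.
have rank_mono a b : f a < f b -> rank a < rank b.
  move=> lt_ab; apply: proper_card; apply/properP; split.
  - by apply/subsetP => c; rewrite !inE => /ltn_trans; apply.
  - by exists a; rewrite !inE ?ltnn.
apply/idP/idP; last exact: rank_mono.
case: (ltngtP (f i) (f j)) => // [lt_ji | /f_inj ->]; last by rewrite ltnn.
by move=> /ltn_trans/(_ (rank_mono _ _ lt_ji)); rewrite ltnn.
Qed.

Lemma rank_lt_card i : rank i < n.
Proof.
rewrite -[X in _ < X]card_ord -cardsT; apply: proper_card; apply/properP.
by split; [exact: subsetT | exists i; rewrite !inE ?ltnn].
Qed.

Lemma rank_inj : injective (fun i => Ordinal (rank_lt_card i)).
Proof.
move=> i j [eq_ij]; apply: f_inj; apply/eqP.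
by case: ltngtP => //; rewrite -rank_ltE eq_ij ltnn.
Qed.

Definition rank_perm : {perm 'I_n} := perm rank_inj.

Lemma rank_perm_ltE i j : (rank_perm i < rank_perm j) = (f i < f j).
Proof. by rewrite !permE rank_ltE. Qed.

End Rank.

Lemma inv_setE n (p : {perm 'I_n.+1}) x y :
  ((x, y) \in inv_set p) = (y < x) && (p^-1 x < p^-1 y).
Proof.
rewrite inE; apply/existsP/andP => [[i /existsP[j /and3P[lt_ij lt_p /eqP[-> ->]]]]|].
  by rewrite !permK.
move=> [lt_yx lt_inv]; exists (p^-1 x); apply/existsP; exists (p^-1 y).
by rewrite !permKV lt_inv lt_yx eqxx.
Qed.

Lemma weak_le_head n (s t : {perm 'I_n.+1}) : weak_le s t -> s ord0 <= t ord0.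
Proof.
move=> /subsetP le_st; rewrite leqNgt; apply/negP => lt_ts.
have ne0 : s^-1 (t ord0) != ord0.
  by apply: contraTneq lt_ts => /(canRL (permKV s)) ->; rewrite ltnn.
have /le_st : (s ord0, t ord0) \in inv_set s by rewrite inv_setE permK lt_ts lt0n.
by rewrite inv_setE permK ltn0 andbF.
Qed.

Lemma weak_le_last n (s t : {perm 'I_n.+1}) : weak_le s t -> t ord_max <= s ord_max.
Proof.
move=> /subsetP le_st; rewrite leqNgt; apply/negP => lt_st.
have neN : s^-1 (t ord_max) != ord_max.
  by apply: contraTneq lt_st => /(canRL (permKV s)) ->; rewrite ltnn.
have /le_st : (t ord_max, s ord_max) \in inv_set s.
  by rewrite inv_setE permK lt_st ltn_neqAle neN; exact: leq_ord.
by rewrite inv_setE permK => /andP[_]; apply/negP; rewrite -leqNgt; exact: leq_ord.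
Qed.

Lemma size_desc_word n (p : {perm 'I_n.+1}) : size (desc_word p) = n.
Proof. by rewrite size_map size_iota. Qed.

Lemma nth_desc_word n (p : {perm 'I_n.+1}) x : x < n ->
  nth false (desc_word p) x = (p (inord x.+1) < p (inord x)).
Proof. by move=> lt_xn; rewrite (nth_map 0) ?size_iota // nth_iota. Qed.

Section Window.

Variables k r m : nat.
Local Notation N := (k + r + m).

Definition win (i : 'I_r.+1) : 'I_N.+1 := inord (k + i).

Lemma winE i : win i = k + i :> nat.
Proof. by rewrite inordK //; have := ltn_ord i; lia. Qed.

Lemma win_inj : injective win.
Proof. by move=> i j /(congr1 val); rewrite /= !winE => /addnI /val_inj. Qed.

Lemma win_inord x : x <= r -> win (inord x) = inord (k + x).
Proof. by move=> le_xr; rewrite /win inordK. Qed.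

Definition in_win (x : nat) := k <= x <= k + r.

Lemma in_win_win i : in_win (win i).
Proof. by rewrite /in_win winE; have := ltn_ord i; lia. Qed.

Definition unwin (x : 'I_N.+1) : 'I_r.+1 := inord (x - k).

Lemma unwinK (x : 'I_N.+1) : in_win x -> win (unwin x) = x.
Proof. by move=> /andP[le_kx le_xr]; apply: val_inj; rewrite /= winE inordK; lia. Qed.

Lemma winK : cancel win unwin.
Proof. by move=> i; apply: val_inj; rewrite /= /unwin winE addKn inordK. Qed.

Definition lift_win_fun (rho : {perm 'I_r.+1}) (x : 'I_N.+1) :=
  if in_win x then win (rho (unwin x)) else x.

Lemma lift_win_fun_inj rho : injective (lift_win_fun rho).
Proof.
move=> x y; rewrite /lift_win_fun.
case: ifPn => [x_in | x_out]; case: ifPn => [y_in | y_out].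
- by move=> /win_inj /perm_inj eq_xy; rewrite -(unwinK x_in) -(unwinK y_in) eq_xy.
- by move=> eq_xy; move: y_out; rewrite -eq_xy in_win_win.
- by move=> eq_xy; move: x_out; rewrite eq_xy in_win_win.
- by [].
Qed.

Definition lift_win rho : {perm 'I_N.+1} := perm (@lift_win_fun_inj rho).

Lemma lift_win_win rho i : lift_win rho (win i) = win (rho i).
Proof. by rewrite permE /lift_win_fun in_win_win winK. Qed.

Lemma lift_win_out rho (x : 'I_N.+1) : ~~ in_win x -> lift_win rho x = x.
Proof. by rewrite permE /lift_win_fun => /negbTE ->. Qed.

Lemma lift_winV_win rho i : (lift_win rho)^-1 (win i) = win (rho^-1 i).
Proof. by rewrite -[in LHS](permKV rho i) -lift_win_win permK. Qed.

Lemma lift_winV_out rho (x : 'I_N.+1) : ~~ in_win x -> (lift_win rho)^-1 x = x.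
Proof. by move=> x_out; rewrite -[in LHS](lift_win_out rho x_out) permK. Qed.

Lemma win_pinj (p : {perm 'I_N.+1}) : injective (fun i => val (p (win i))).
Proof. by move=> i j /val_inj /perm_inj /win_inj. Qed.

Definition pattern p : {perm 'I_r.+1} := rank_perm (@win_pinj p).

Lemma pattern_ltE p i j : (pattern p i < pattern p j) = (p (win i) < p (win j)).
Proof. exact: rank_perm_ltE. Qed.

Lemma pattern_lift_win p rho : pattern (lift_win rho * p) = rho * pattern p.
Proof.
by apply: eq_perm_order => i j; rewrite pattern_ltE !permM !lift_win_win -pattern_ltE.
Qed.

Lemma desc_word_pattern p : desc_word (pattern p) = take r (drop k (desc_word p)).
Proof.
apply: (@eq_from_nth _ false) => [|x].
  by rewrite size_desc_word size_takel // size_drop size_desc_word; lia.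
rewrite size_desc_word => lt_xr.
rewrite nth_take // nth_drop !nth_desc_word; try lia.
by rewrite pattern_ltE !win_inord ?addnS // ltnW.
Qed.

Lemma weak_le_lift_win p rho :
  weak_le (pattern p) (rho * pattern p) -> weak_le p (lift_win rho * p).
Proof.
move=> /subsetP le_st; apply/subsetP => -[x y].
rewrite -(permKV p x) -(permKV p y); set i := p^-1 x; set j := p^-1 y.
rewrite !inv_setE !permK invMg !permM !permK => /andP[lt_p lt_ij]; rewrite lt_p /=.
have [i_in | i_out] := boolP (in_win i); have [j_in | j_out] := boolP (in_win j).
- move: lt_p lt_ij; rewrite -(unwinK i_in) -(unwinK j_in).
  set a := unwin i; set b := unwin j.
  rewrite -pattern_ltE !lift_winV_win !winE ltn_add2l => lt_s lt_ab.
  have /le_st : (pattern p a, pattern p b) \in inv_set (pattern p).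
    by rewrite inv_setE !permK lt_s.
  by rewrite inv_setE invMg !permM !permK ltn_add2l => /andP[].
- rewrite (lift_winV_out _ j_out) -(unwinK i_in) lift_winV_win winE.
  move: i_in j_out lt_ij; rewrite /in_win; have := ltn_ord (rho^-1 (unwin i)); lia.
- rewrite (lift_winV_out _ i_out) -(unwinK j_in) lift_winV_win winE.
  move: i_out j_in lt_ij; rewrite /in_win; lia.
- by rewrite !lift_winV_out.
Qed.

Lemma take_desc_word_lift_win p rho :
  pattern p ord0 <= (rho * pattern p)%g ord0 ->
  last letter_a (take k (desc_word p)) = letter_a ->
  take k (desc_word (lift_win rho * p)) = take k (desc_word p).
Proof.
rewrite permM leqNgt pattern_ltE -leqNgt => le_first last_a.
have q_out x : x < k -> (lift_win rho * p) (inord x) = p (inord x).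
  by move=> lt_xk; rewrite permM lift_win_out // /in_win inordK; lia.
apply: (@eq_from_nth _ false) => [|x].
  by rewrite !size_takel ?size_desc_word //; lia.
rewrite size_takel ?size_desc_word => [lt_xk|]; last lia.
rewrite !nth_take // !nth_desc_word; try lia.
rewrite (q_out x) //; have [lt_x1k | le_kx1] := ltnP x.+1 k; first by rewrite q_out.
have -> : x = k.-1 by lia.
have k_pos : 0 < k by lia.
move: last_a; rewrite -nth_last size_takel ?size_desc_word; last lia.
rewrite nth_take ?prednK // nth_desc_word ?prednK; try lia.
rewrite -[k in inord k]addn0 -/(win ord0) permM lift_win_win.
move=> /negbT; rewrite -leqNgt => le_pred.
by rewrite !ltnNge le_pred (leq_trans le_pred le_first).
Qed.

Lemma drop_desc_word_lift_win p rho :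
  (rho * pattern p)%g ord_max <= pattern p ord_max ->
  head letter_a (drop (k + r) (desc_word p)) = letter_a ->
  drop (k + r) (desc_word (lift_win rho * p)) = drop (k + r) (desc_word p).
Proof.
rewrite permM leqNgt pattern_ltE -leqNgt => le_last head_a.
have q_out x : k + r < x -> x <= N -> (lift_win rho * p) (inord x) = p (inord x).
  by move=> lt_x le_xN; rewrite permM lift_win_out // /in_win inordK; lia.
apply: (@eq_from_nth _ false) => [|x]; first by rewrite !size_drop !size_desc_word.
rewrite size_drop size_desc_word => lt_xm; rewrite !nth_drop !nth_desc_word; try lia.
rewrite q_out; try lia.
case: x lt_xm => [|x] lt_xm; last by rewrite q_out //; lia.
move: head_a; rewrite -nth0 nth_drop !addn0 nth_desc_word; last lia.
rewrite -/(win ord_max) permM lift_win_win.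
move=> /negbT; rewrite -leqNgt => le_succ.
by rewrite !ltnNge le_succ (leq_trans le_last le_succ).
Qed.

Lemma desc_word_lift_win p rho :
  weak_le (pattern p) (rho * pattern p) ->
  last letter_a (take k (desc_word p)) = letter_a ->
  head letter_a (drop (k + r) (desc_word p)) = letter_a ->
  desc_word (lift_win rho * p) =
    take k (desc_word p) ++ desc_word (rho * pattern p) ++ drop (k + r) (desc_word p).
Proof.
move=> le_st last_a head_a.
rewrite -[LHS](cat_take_drop k) -[drop k _](cat_take_drop r) drop_drop [r + k]addnC.
rewrite take_desc_word_lift_win ?(weak_le_head le_st) //.
rewrite drop_desc_word_lift_win ?(weak_le_last le_st) //.
by rewrite -desc_word_pattern pattern_lift_win.
Qed.

Lemma dom_at_infix (P Q w1 w2 : seq bool) :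
  size P = k -> size w2 = r -> size Q = m ->
  last letter_a P = letter_a -> head letter_a Q = letter_a ->
  dom_at r w1 w2 -> dom_at N (P ++ w1 ++ Q) (P ++ w2 ++ Q).
Proof.
move=> sizeP sizew2 sizeQ last_a head_a [phi [phi_inj phiD]].
have take_P : take k (P ++ w2 ++ Q) = P by rewrite take_size_cat.
have drop_Q : drop (k + r) (P ++ w2 ++ Q) = Q.
  by rewrite catA drop_size_cat // size_cat sizeP sizew2.
have pattern_D p : p \in Dset N (P ++ w2 ++ Q) -> pattern p \in Dset r w2.
  by rewrite !inE desc_word_pattern => /eqP ->; rewrite drop_size_cat // take_size_cat.
pose ext p := lift_win (phi (pattern p) * (pattern p)^-1) * p.
have pattern_ext p : pattern (ext p) = phi (pattern p) by rewrite pattern_lift_win mulgKV.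
exists ext; split.
- move=> p1 p2 D1 D2 eq_ext.
  have eq_pattern : pattern p1 = pattern p2.
    by apply: phi_inj; rewrite ?pattern_D // -!pattern_ext eq_ext.
  by move: eq_ext; rewrite /ext eq_pattern => /mulgI.
- move=> p Dp; have [Dt le_st] := phiD _ (pattern_D _ Dp).
  rewrite -[phi _](mulgKV (pattern p)) in Dt le_st.
  split; last exact: weak_le_lift_win.
  move: Dp Dt; rewrite !inE => /eqP dp /eqP dt.
  by rewrite desc_word_lift_win // dp ?take_P ?drop_Q // dt.
Qed.

End Window.

Lemma dominates_infix (P Q w1 w2 : seq bool) :
  last letter_a P = letter_a -> head letter_a Q = letter_a ->
  size w1 = size w2 -> dom_at (size w1) w1 w2 ->
  dominates (P ++ w1 ++ Q) (P ++ w2 ++ Q).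
Proof.
move=> last_a head_a eq_size D; split; first by rewrite !size_cat eq_size.
have -> : size (P ++ w1 ++ Q) = size P + size w1 + size Q by rewrite !size_cat addnA.
exact: dom_at_infix.
Qed.

Theorem proposition5p3 (r : nat) (S T : {set 'I_r}) (u v : seq bool) :
  dom_at r (mword S) (mword T) ->
  [/\ dominates (mword S ++ letter_a :: v) (mword T ++ letter_a :: v),
      dominates (u ++ letter_a :: mword S) (u ++ letter_a :: mword T)
    & dominates (u ++ letter_a :: mword S ++ letter_a :: v)
                (u ++ letter_a :: mword T ++ letter_a :: v)].
Proof.
move=> D.
have size_mword (X : {set 'I_r}) : size (mword X) = r by rewrite size_map size_enum_ord.
have eq_size : size (mword S) = size (mword T) by rewrite !size_mword.
have {}D : dom_at (size (mword S)) (mword S) (mword T) by rewrite size_mword.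
split.
- exact: (@dominates_infix [::] (letter_a :: v)).
- rewrite -!(cat_rcons letter_a u) -[mword S]cats0 -[mword T]cats0.
  by apply: dominates_infix; rewrite ?last_rcons.
- by rewrite -!(cat_rcons letter_a u); apply: dominates_infix; rewrite ?last_rcons.
Qed.
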